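(* Let $k\ge3$ be an integer, $p>k+1$ a prime, and $l$ a positive integer with $(k+1)\nmid l$. Then the tuple $(1,2,\ldots,k)$, viewed as an element of $\mathbb{Z}_{p,l}^k$, is $(k,p,l)$-improper. Consequently, if $p>k+1$ and $I(k,p,l)=\emptyset$, then $(k+1)\mid l$.
   Context: For $x\in\mathbb{R}$, $\lVert x\rVert$ is the distance from $x$ to the nearest integer. $\mathbb{Z}_n$ denotes integers modulo $n$; $\mathbb{Z}_{p,l}:=\mathbb{Z}_{pl}\setminus p\mathbb{Z}_l$ (residues mod $pl$ not divisible by $p$). A tuple $\mathbf v\in\mathbb{Z}_{p,l}^k$ is $(k,p,l)$-proper if either there is an index $i$ with $\gcd(l,v_1,\ldots,v_{i-1},v_{i+1},\ldots,v_k)>1$, or there is $t\in\frac1{lp}\mathbb{Z}$ with $\lVert tv_j\rVert\ge\frac1{k+1}$ for all $j$; otherwise it is $(k,p,l)$-improper, and $I(k,p,l)$ is the set of improper tuples. *)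

From HB Require Import structures.
From mathcomp Require Import all_boot all_order all_algebra.
Unset Printing Implicit Defensive.
Import Order.TTheory GRing.Theory Num.Theory.
Local Open Scope ring_scope.

(* Residues mod (p*l) are represented by their least nonnegative representative. *)
Definition inZpl (p l x : nat) : bool := ((x < p * l) && ~~ (p %| x))%N.

Definition distZ (x : rat) : rat :=
  Num.min (x - (Num.floor x)%:~R) ((Num.floor x + 1)%:~R - x).

Definition gcd_omit (k l : nat) (v : 'I_k -> nat) (i : 'I_k) : nat :=
  gcdn l (\big[gcdn/0%N]_(j < k | j != i) v j).

Definition proper (k p l : nat) (v : 'I_k -> nat) : Prop :=
  (exists i : 'I_k, (1 < gcd_omit k l v i)%N)
  \/ (exists a : int, forall j : 'I_k,
        ((k.+1)%:R : rat)^-1 <= distZ (a%:~R / ((l * p)%N)%:R * (v j)%:R)).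

Definition improper (k p l : nat) (v : 'I_k -> nat) : Prop :=
  (forall j : 'I_k, inZpl p l (v j)) /\ ~ proper k p l v.

Definition tuple1k (k : nat) : 'I_k -> nat := fun j => (nat_of_ord j).+1.

(* Suppose t = a/(lp) keeps every speed 1, ..., k at distance at least 1/(k+1)
   from the integers, and cut the circle R/Z into k+1 sectors of length 1/(k+1).
   If it and jt (0 <= i < j <= k) fell into the same sector, (j - i)t would be
   closer than 1/(k+1) to an integer; so the k+1 points 0, t, ..., kt occupy
   distinct sectors, and some xt with 0 < x <= k lies in the last one.  Being at
   distance at least 1/(k+1) from 1, it is exactly k/(k+1) mod 1, whence
   (k+1) | k lp and, p > k+1 being prime, (k+1) | l.  The gcd alternative of
   properness fails since every k-1 of the entries 1, ..., k contain 1 or 2, 3. *)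

From mathcomp Require Import all_boot all_order all_algebra.
From mathcomp Require Import zify ring.
Import Order.TTheory GRing.Theory Num.Theory.
Local Open Scope ring_scope.

Lemma distZ_intr_div (u : int) (N : nat) : (0 < N)%N ->
  distZ (u%:~R / N%:R) =
  Num.min ((u %% N)%Z%:~R / N%:R) (1 - (u %% N)%Z%:~R / N%:R).
Proof.
move=> N_gt0; have N_neq0 : (N%:R : rat) != 0 by rewrite pnatr_eq0 -lt0n.
set r := (u %% N)%Z; set q := (u %/ N)%Z.
have r_ge0 : 0 <= r%:~R :> rat by rewrite ler0z /r; lia.
have r_ltN : r%:~R < (N%:Z)%:~R :> rat by rewrite ltr_int /r; lia.
have u_split : (u%:~R / N%:R : rat) = q%:~R + r%:~R / N%:R.
  by rewrite [in LHS](divz_eq u N) intrD intrM /=; field.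
have floor_u : Num.floor (u%:~R / N%:R : rat) = q.
  apply/eqP; rewrite floor_eq u_split intrD lerDl ltrD2l.
  by rewrite divr_ge0 ?ler0n // ltr_pdivrMr ?ltr0n // mul1r.
by rewrite /distZ floor_u u_split intrD; congr Num.min; ring.
Qed.

Lemma inv_le_natr_div (k m N : nat) : (0 < N)%N ->
  (((k.+1)%:R : rat)^-1 <= m%:R / N%:R) = (N <= k.+1 * m)%N.
Proof.
move=> N_gt0.
by rewrite ler_pdivlMr ?ltr0n // mulrC ler_pdivrMr // -natrM ler_nat mulnC.
Qed.

Lemma inv_le_distZ_intr_div (k N : nat) (u : int) : (0 < N)%N ->
  ((k.+1)%:R : rat)^-1 <= distZ (u%:~R / N%:R) ->
  (N <= k.+1 * `|(u %% N)%Z| <= k * N)%N.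
Proof.
move=> N_gt0; rewrite distZ_intr_div // le_min.
have [r r_def] : exists r : nat, (u %% N)%Z = r by exists `|(u %% N)%Z|%N; lia.
have r_ltN : (r < N)%N by have := ltz_pmod u (N_gt0 : 0 < N%:Z); rewrite r_def.
rewrite r_def; have -> : 1 - r%:~R / N%:R = (N - r)%N%:R / N%:R :> rat.
  by rewrite natrB ?(ltnW r_ltN) // mulrBl divff // pnatr_eq0 -lt0n.
rewrite !inv_le_natr_div // => /andP [lo hi]; nia.
Qed.

Lemma eq_divn_ltnD {d m n : nat} : (0 < d)%N -> (m %/ d = n %/ d)%N -> (m < n + d)%N.
Proof.
move=> d_gt0 eq_div; rewrite {1}(divn_eq m d) eq_div {2}(divn_eq n d) -addnA ltn_add2l.
by rewrite ltn_addl // ltn_pmod.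
Qed.

Lemma sector_gap (k : nat) {N P Q D : nat} : (P < N)%N -> (D < N)%N ->
  Q = ((P + D) %% N)%N -> (k.+1 * P < k.+1 * Q + N)%N -> (k.+1 * Q < k.+1 * P + N)%N ->
  (k.+1 * D < N)%N || (k * N < k.+1 * D)%N.
Proof.
move=> P_lt D_lt ->.
case: (ltnP (P + D) N) => [sum_lt | sum_ge].
  by rewrite modn_small // mulnDr ltn_add2l => _ ->.
rewrite -{1 2}(subnK sum_ge) modnDr modn_small; last by lia.
have split_mul : (k.+1 * (P + D - N) + k.+1 * N = k.+1 * P + k.+1 * D)%N.
  by rewrite -mulnDr subnK // mulnDr.
have := mulSnr k N; lia.
Qed.

Section LonelyRunner.

Context {k N : nat} {a : int}.
Hypothesis N_gt0 : (0 < N)%N.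
Hypothesis lonely : forall j : nat, (0 < j <= k)%N ->
  ((k.+1)%:R : rat)^-1 <= distZ (a%:~R / N%:R * j%:R).

(* [lap_pos x] is N times the fractional part of (a/N) x. *)
Definition lap_pos (x : nat) : nat := `|(a * x %% N)%Z|.
Definition lap_sector (x : nat) : nat := (k.+1 * lap_pos x %/ N)%N.

Lemma lap_pos_ltN (x : nat) : (lap_pos x < N)%N.
Proof. rewrite /lap_pos; have := ltz_pmod (a * x) (N_gt0 : 0 < N%:Z); lia. Qed.

Lemma lap_posD (x y : nat) : lap_pos (x + y) = ((lap_pos x + lap_pos y) %% N)%N.
Proof.
have N_neq0 : N%:Z != 0 by rewrite eqz_nat -lt0n.
apply/eqP; rewrite -eqz_nat -modz_nat /lap_pos !PoszD.
by rewrite !gez0_abs ?modz_ge0 // modzDm mulrDr.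
Qed.

Lemma lap_pos_far (x : nat) : (0 < x <= k)%N -> (N <= k.+1 * lap_pos x <= k * N)%N.
Proof.
move=> x_range; apply: inv_le_distZ_intr_div => //.
by rewrite intrM mulrAC; exact: lonely.
Qed.

Lemma lap_sector_ltS (x : nat) : (lap_sector x < k.+1)%N.
Proof. by rewrite ltn_divLR // ltn_pmul2l // lap_pos_ltN. Qed.

Lemma lap_sector_neq {i j : nat} :
  (i < j)%N -> (j <= k)%N -> lap_sector i != lap_sector j.
Proof.
move=> lt_ij le_jk.
have /andP [far_lo far_hi] : (N <= k.+1 * lap_pos (j - i) <= k * N)%N.
  by apply: lap_pos_far; rewrite subn_gt0 lt_ij (leq_trans (leq_subr _ _)).
have pos_j : lap_pos j = ((lap_pos i + lap_pos (j - i)) %% N)%N.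
  by rewrite -lap_posD subnKC // ltnW.
apply/eqP => eq_sector.
have /orP [] := sector_gap k (lap_pos_ltN i) (lap_pos_ltN (j - i)) pos_j
  (eq_divn_ltnD N_gt0 eq_sector) (eq_divn_ltnD N_gt0 (esym eq_sector)).
  by rewrite ltnNge far_lo.
by rewrite ltnNge far_hi.
Qed.

Lemma lonely_runner_dvd : (k.+1 %| k * N)%N.
Proof.
pose f (x : 'I_k.+1) : 'I_k.+1 := Ordinal (lap_sector_ltS x).
have f_inj : injective f.
  move=> x y /(congr1 val) /= eq_xy; apply/val_inj/eqP.
  case: (ltngtP x y) => [lt_xy | lt_yx | //].
    by have := lap_sector_neq lt_xy (leq_ord y); rewrite eq_xy eqxx.
  by have := lap_sector_neq lt_yx (leq_ord x); rewrite eq_xy eqxx.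
have [x x_last] : exists x : 'I_k.+1, lap_sector x = k.
  by have /codomP [x /(congr1 val) /= x_last] := injF_onto f_inj ord_max; exists x.
have [x0 | x_gt0] := posnP x.
  by move: x_last; rewrite x0 /lap_sector /lap_pos mulr0 mod0z muln0 div0n => <-.
have /andP [_ far_hi] : (N <= k.+1 * lap_pos x <= k * N)%N.
  by apply: lap_pos_far; rewrite x_gt0 leq_ord.
have far_lo : (k * N <= k.+1 * lap_pos x)%N by rewrite -leq_divRL // -/(lap_sector x) x_last.
have -> : (k * N = k.+1 * lap_pos x)%N by apply/eqP; rewrite eqn_leq far_lo far_hi.
exact: dvdn_mulr.
Qed.

End LonelyRunner.

Lemma tuple1k_inZpl (k p l : nat) (j : 'I_k) :
  prime p -> (k < p)%N -> (0 < l)%N -> inZpl p l (tuple1k k j).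
Proof.
move=> p_prime lt_kp l_gt0; have lt_jp : (j.+1 < p)%N := leq_ltn_trans (ltn_ord j) lt_kp.
by rewrite /inZpl /tuple1k gtnNdvd // (leq_trans lt_jp) // leq_pmulr.
Qed.

Lemma gcd_omit_tuple1k (k l : nat) (i : 'I_k) :
  (3 <= k)%N -> gcd_omit k l (tuple1k k) i = 1%N.
Proof.
move=> k_ge3; apply/eqP; rewrite -dvdn1 /gcd_omit.
apply: dvdn_trans (dvdn_gcdr _ _) _.
have k_gt0 : (0 < k)%N by apply: leq_trans k_ge3.
have [-> | i_neq0] := eqVneq i (Ordinal k_gt0); last first.
  by apply: (biggcdn_inf (Ordinal k_gt0)); rewrite // eq_sym.
have k_gt1 : (1 < k)%N by apply: leq_trans k_ge3.
have dvd_succ (n : 'I_k) : (0 < n)%N ->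
    (\big[gcdn/0]_(j < k | j != Ordinal k_gt0) tuple1k k j %| n.+1)%N.
  by move=> n_gt0; apply: (biggcdn_inf n); rewrite // -val_eqE /= -lt0n.
exact: dvdn_sub (dvd_succ (Ordinal k_ge3) isT) (dvd_succ (Ordinal k_gt1) isT).
Qed.

Lemma tuple1k_improper {k p l : nat} :
  (3 <= k)%N -> prime p -> (k.+1 < p)%N -> (0 < l)%N -> ~~ (k.+1 %| l)%N ->
  improper k p l (tuple1k k).
Proof.
move=> k_ge3 p_prime lt_kp l_gt0 ndvd_l; split=> [j | ].
  by apply: tuple1k_inZpl => //; apply: ltnW.
case=> [[i] | [a far]]; first by rewrite gcd_omit_tuple1k.
have N_gt0 : (0 < l * p)%N by rewrite muln_gt0 l_gt0 prime_gt0.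
have lonely (j : nat) : (0 < j <= k)%N ->
    ((k.+1)%:R : rat)^-1 <= distZ (a%:~R / (l * p)%N%:R * j%:R).
  move=> /andP [j_gt0 le_jk]; have lt_jk : (j.-1 < k)%N by rewrite prednK.
  by have := far (Ordinal lt_jk); rewrite /tuple1k /= prednK.
have coprime_p : coprime k.+1 p by rewrite coprime_sym prime_coprime // gtnNdvd.
have := lonely_runner_dvd N_gt0 lonely.
by rewrite Gauss_dvdr ?coprimeSn // Gauss_dvdl // (negbTE ndvd_l).
Qed.

Theorem mainTheorem7 (k p l : nat) :
  (3 <= k)%N -> prime p -> (k.+1 < p)%N -> (0 < l)%N ->
  (~~ (k.+1 %| l)%N -> improper k p l (tuple1k k))
  /\ ((forall v : 'I_k -> nat, ~ improper k p l v) -> (k.+1 %| l)%N).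
Proof.
move=> k_ge3 p_prime lt_kp l_gt0.
have improper_1k := tuple1k_improper k_ge3 p_prime lt_kp l_gt0.
split=> // no_improper; apply: contraT => /improper_1k.
by move/no_improper.
Qed.
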